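(* For every $\mu\in\overline{\mathbb R}$, the subspace $A_{[\mu]}$ is a subalgebra of $A_\mu$. Further, $\Delta_\mu(A_{[\mu]})\subset A_{[\mu]}\otimes A_{[\mu]}$, and $A_{[\mu]}$ becomes a bialgebra when endowed with the coproduct $\Delta_\mu$.
   Context: Let $\Gamma$ be a discrete submonoid of $\{(r,d)\in\mathbb R^2: r>0\text{ or }(r=0\text{ and }d\ge0)\}$ and $A=\bigoplus_{\gamma\in\Gamma}A^\gamma$ a connected ($A^0=k$) $\Gamma$-graded bialgebra over a field $k$, coproduct $\Delta$. Write $|a|=\gamma$ for $a\in A^\gamma$. For homogeneous $a$, $L(a)$ (resp. $R(a)$) is the set of $\beta$ (resp. $\gamma$) such that $\Delta(a)$ has a nonzero component in $A^\beta\otimes A^\gamma$. Let $\overline{\mathbb R}=\mathbb R\cup\{\infty\}$ with $\infty$ larger than all reals; $\Gamma_\infty=\{(r,d)\in\Gamma:r=0\}$, $\Gamma_\mu=\{(r,d)\in\Gamma: d=\mu r\}$ for real $\mu$, $\Gamma_{\le\mu}=\bigcup_{\nu\le\mu}\Gamma_\nu$, $\Gamma_{\ge\mu}=\bigcup_{\nu\ge\mu}\Gamma_\nu$. A homogeneous $a$ is of slope $\mu$ if $|a|\in\Gamma_\mu$, and semistable of slope $\mu$ if moreover $L(a)\subset\Gamma_{\le\mu}$ (equivalently $R(a)\subset\Gamma_{\ge\mu}$). $A_\mu$ (resp. $A_{[\mu]}$) is the span of the homogeneous elements of slope $\mu$ (resp. semistable of slope $\mu$). $p_\mu:A\to A_\mu$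 is the projection along $\bigoplus_{\gamma\notin\Gamma_\mu}A^\gamma$ and $\Delta_\mu=(p_\mu\otimes p_\mu)\circ\Delta$. *)

From HB Require Import structures.
From mathcomp Require Import all_boot all_order all_algebra.
From mathcomp Require Import reals.
Set Implicit Arguments. Unset Strict Implicit. Unset Printing Implicit Defensive.
Import Order.TTheory GRing.Theory Num.Theory.
Local Open Scope ring_scope.

Section Defs.
Variables (R : realType) (k : fieldType) (A : algType k).

Notation deg := (R * R)%type.
Definition dadd (g h : deg) : deg := (g.1 + h.1, g.2 + h.2).

Definition lin (f : A -> k) := forall c x y, f (c *: x + y) = c * f x + f y.

(* An element of A (x) A (resp. A (x) A (x) A) is represented by a formal
   finite sum of pure tensors; two formal sums denote the same tensor iff
   they agree against all pairs (triples) of linear functionals (over a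
   field the map U (x) V -> Bil(dual U, dual V) is injective). *)
Definition teq2 (t t' : seq (A * A)) :=
  forall f g, lin f -> lin g ->
    \sum_(x <- t) f x.1 * g x.2 = \sum_(x <- t') f x.1 * g x.2.
Definition teq3 (t t' : seq (A * A * A)) :=
  forall f g h, lin f -> lin g -> lin h ->
    \sum_(x <- t) f x.1.1 * g x.1.2 * h x.2 =
    \sum_(x <- t') f x.1.1 * g x.1.2 * h x.2.

Definition tscale (c : k) (t : seq (A * A)) := [seq (c *: x.1, x.2) | x <- t].
Definition tmul (t t' : seq (A * A)) :=
  [seq (x.1 * y.1, x.2 * y.2) | x <- t, y <- t'].
Definition tmap2 (f g : A -> A) (t : seq (A * A)) := [seq (f x.1, g x.2) | x <- t].
Definition comul_l (D : A -> seq (A * A)) (t : seq (A * A)) : seq (A * A * A) :=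
  flatten [seq [seq (y.1, y.2, x.2) | y <- D x.1] | x <- t].
Definition comul_r (D : A -> seq (A * A)) (t : seq (A * A)) : seq (A * A * A) :=
  flatten [seq [seq (x.1, y.1, y.2) | y <- D x.2] | x <- t].
Definition in_tensor (P : A -> Prop) (t : seq (A * A)) :=
  exists t', (forall x, x \in t' -> P x.1 /\ P x.2) /\ teq2 t t'.

(* (P, D, eps) is a bialgebra (P a subspace containing 1, closed under product) *)
Definition bialg_on (P : A -> Prop) (D : A -> seq (A * A)) (eps : A -> k) :=
  [/\ (forall c a b, P a -> P b -> teq2 (D (c *: a + b)) (tscale c (D a) ++ D b)),
      (forall a, P a -> teq3 (comul_l D (D a)) (comul_r D (D a))),
      (forall a, P a -> \sum_(y <- D a) eps y.1 *: y.2 = a /\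
                        \sum_(y <- D a) eps y.2 *: y.1 = a),
      (forall a b, P a -> P b -> teq2 (D (a * b)) (tmul (D a) (D b))) /\
        teq2 (D 1) [:: (1, 1)]
    & (forall c a b, P a -> P b -> eps (c *: a + b) = c * eps a + eps b) /\
      (forall a b, P a -> P b -> eps (a * b) = eps a * eps b) /\ eps 1 = 1].

(* The grading A = (+)_{g in Gam} A^g is given by the projections pi g onto
   A^g, with a (finite) list supp a containing every degree g with
   pi g a <> 0. *)
Definition homog (pi : deg -> A -> A) (g : deg) (a : A) := pi g a = a.

Definition discrete_monoid (Gam : deg -> Prop) :=
  [/\ Gam (0, 0), (forall g h, Gam g -> Gam h -> Gam (dadd g h)),
      (forall g, Gam g -> 0 < g.1 \/ (g.1 = 0 /\ 0 <= g.2))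
    & (forall g, Gam g -> exists2 e : R, 0 < e &
         forall h, Gam h -> `|h.1 - g.1| < e -> `|h.2 - g.2| < e -> h = g)].

Definition grading (Gam : deg -> Prop) (pi : deg -> A -> A) (supp : A -> seq deg) :=
  [/\ (forall g c x y, pi g (c *: x + y) = c *: pi g x + pi g y),
      (forall g x, pi g (pi g x) = pi g x),
      (forall g h x, g != h -> pi g (pi h x) = 0),
      (forall g x, pi g x != 0 -> Gam g /\ g \in supp x)
    & (forall x, x = \sum_(g <- undup (supp x)) pi g x)].

Definition graded_conn_bialg (Gam : deg -> Prop) (pi : deg -> A -> A)
    (supp : A -> seq deg) (D : A -> seq (A * A)) (eps : A -> k) :=
  [/\ discrete_monoid Gam, grading Gam pi supp,
      (forall g h x y, homog pi g x -> homog pi h y -> homog pi (dadd g h) (x * y))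
        /\ homog pi (0, 0) 1,
      (forall x, homog pi (0, 0) x -> exists c : k, x = c%:A)
    & bialg_on (fun _ => True) D eps /\
      (forall g x b b', homog pi g x -> dadd b b' != g ->
          teq2 (tmap2 (pi b) (pi b') (D x)) [::]) /\
      (forall g x, homog pi g x -> g != (0, 0) -> eps x = 0)].

(* slopes mu in R U {oo}: None stands for oo *)
Definition in_slope (mu : option R) (g : deg) : bool :=
  if mu is Some m then g.2 == m * g.1 else g.1 == 0.
Definition ext_le (nu mu : option R) : bool :=
  match nu, mu with
  | _, None => true
  | None, Some _ => false
  | Some a, Some b => a <= b
  end.
Definition Gam_le (Gam : deg -> Prop) (mu : option R) (g : deg) :=
  exists nu, ext_le nu mu /\ Gam g /\ in_slope nu g.

Definition Lset (pi : deg -> A -> A) (D : A -> seq (A * A)) (a : A) (b : deg) :=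
  exists g, ~ teq2 (tmap2 (pi b) (pi g) (D a)) [::].

Definition of_slope Gam pi (mu : option R) (a : A) :=
  exists g, homog pi g a /\ Gam g /\ in_slope mu g.
Definition semistable Gam pi D (mu : option R) (a : A) :=
  exists g, [/\ homog pi g a, Gam g, in_slope mu g &
                forall b, Lset pi D a b -> Gam_le Gam mu b].

Definition span (P : A -> Prop) (x : A) :=
  exists s : seq (k * A), (forall y, y \in s -> P y.2) /\
                          x = \sum_(y <- s) y.1 *: y.2.

Definition A_sl Gam pi mu := span (of_slope Gam pi mu).
Definition A_ss Gam pi D mu := span (semistable Gam pi D mu).

Definition p_mu (pi : deg -> A -> A) (supp : A -> seq deg) (mu : option R) (a : A) :=
  \sum_(g <- undup (supp a) | in_slope mu g) pi g a.
Definition Delta_mu pi supp (D : A -> seq (A * A)) mu (a : A) :=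
  tmap2 (p_mu pi supp mu) (p_mu pi supp mu) (D a).

End Defs.

(* Call b a left degree of a homogeneous x when (pi_b (x) pi_c) Delta(x) <> 0 for some c.
   Since Delta is graded and multiplicative, the left degrees of xy are sums of left degrees of
   x and y, so semistable elements are closed under products.  Delta_mu(x), for x semistable of
   degree d, is the sum of the components (pi_b (x) pi_c) Delta(x) with b, c of slope mu and
   b + c = d.  By coassociativity the left degrees of their left tensor factors are left degrees
   of x, while those b' of their right factors satisfy b + b' in L(x); as b has slope mu, b' has
   slope at most mu, so both factors lie in A_[mu].  Since Gam lies in the half plane r >= 0,
   Gam_{<= mu} is cut out by the inequality d <= mu r, so left degrees b1, b2 add up to a degree
   of slope mu only if both have slope mu: this makes Delta_mu multiplicative on A_[mu].
   Tensors are formal sums compared against pairs of linear functionals; Zorn's lemma provides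
   enough functionals to expand a tensor in dual bases of its factors, which is how membership
   in A_[mu] (x) A_[mu] is obtained. *)

From Pilot Require Import Defs.
From HB Require Import structures.
From mathcomp Require Import all_boot all_order all_algebra.
From mathcomp Require Import reals.
From mathcomp Require Import boolp classical_sets ring.
Import Order.TTheory GRing.Theory Num.Theory.
Local Open Scope ring_scope.
Local Open Scope classical_set_scope.
Set Implicit Arguments. Unset Strict Implicit.

Lemma big_uniq_supp (I : eqType) (V : nmodType) (r s : seq I) (P : pred I) (F : I -> V) :
  uniq r -> uniq s -> (forall i, F i != 0 -> (i \in r) && (i \in s)) ->
  \sum_(i <- r | P i) F i = \sum_(i <- s | P i) F i.
Proof.
move=> ur us rs; apply: perm_big_supp; apply: uniq_perm; rewrite ?filter_uniq // => i.
by rewrite !mem_filter; case Fi: (F i != 0) => //=; have /andP [-> ->] := rs i Fi.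
Qed.

Lemma big_exchange3 (V : nmodType) (I J K : Type) (rI : seq I) (rJ : seq J) (rK : seq K)
    (P : pred K) (F : I -> J -> K -> V) :
  \sum_(i <- rI) \sum_(j <- rJ) \sum_(l <- rK | P l) F i j l =
  \sum_(l <- rK | P l) \sum_(i <- rI) \sum_(j <- rJ) F i j l.
Proof. by under eq_bigr => i _ do rewrite exchange_big; rewrite exchange_big. Qed.

Section LinearAlgebra.
Variables (k : fieldType) (A : algType k).

Lemma lin0 (f : A -> k) : lin f -> f 0 = 0.
Proof.
by move=> hf; have := hf 1 0 0; rewrite scale1r addr0 mul1r -{1}[f 0]addr0 => /addrI.
Qed.

Lemma linZ (f : A -> k) : lin f -> forall c x, f (c *: x) = c * f x.
Proof. by move=> hf c x; have := hf c x 0; rewrite (lin0 hf) !addr0. Qed.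

Lemma lin_sum (f : A -> k) : lin f ->
  forall (I : Type) (r : seq I) (P : pred I) (F : I -> A),
  f (\sum_(i <- r | P i) F i) = \sum_(i <- r | P i) f (F i).
Proof.
move=> hf I r P F; apply: (big_morph f _ (lin0 hf)) => x y.
by have := hf 1 x y; rewrite scale1r mul1r.
Qed.

Definition linear_endo (F : A -> A) := forall c x y, F (c *: x + y) = c *: F x + F y.

Lemma lin_comp (f : A -> k) (F : A -> A) : lin f -> linear_endo F -> lin (f \o F).
Proof. by move=> hf hF c x y /=; rewrite hF hf. Qed.

Lemma lin_mulr (f : A -> k) z : lin f -> lin (fun x => f (x * z)).
Proof. by move=> hf c x y; rewrite mulrDl -scalerAl hf. Qed.

Lemma lin_mull (f : A -> k) z : lin f -> lin (fun x => f (z * x)).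
Proof. by move=> hf c x y; rewrite mulrDr -scalerAr hf. Qed.

Lemma lin_sumf (I : Type) (r : seq I) (F : I -> A -> k) :
  (forall i, lin (F i)) -> lin (fun x => \sum_(i <- r) F i x).
Proof. by move=> hF c x y; rewrite mulr_sumr -big_split; apply: eq_bigr => i _; apply: hF. Qed.

Lemma linear_endo0 F : linear_endo F -> F 0 = 0.
Proof.
by move=> hF; have := hF 1 0 0; rewrite !scale1r addr0 -{1}[F 0]addr0 => /addrI.
Qed.

Lemma linear_endoZ F : linear_endo F -> forall c x, F (c *: x) = c *: F x.
Proof. by move=> hF c x; have := hF c x 0; rewrite (linear_endo0 hF) !addr0. Qed.

Lemma linear_endo_sum F : linear_endo F ->
  forall (I : Type) (r : seq I) (P : pred I) (G : I -> A),
  F (\sum_(i <- r | P i) G i) = \sum_(i <- r | P i) F (G i).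
Proof.
move=> hF I r P G; apply: (big_morph F _ (linear_endo0 hF)) => x y.
by have := hF 1 x y; rewrite !scale1r.
Qed.

Lemma span0 (P : A -> Prop) : Defs.span P 0.
Proof. by exists [::]; rewrite big_nil. Qed.

Lemma span_id (P : A -> Prop) x : P x -> Defs.span P x.
Proof.
move=> Px; exists [:: (1, x)]; rewrite big_seq1 scale1r; split=> // y.
by rewrite inE => /eqP ->.
Qed.

Lemma spanD (P : A -> Prop) c x y : Defs.span P x -> Defs.span P y -> Defs.span P (c *: x + y).
Proof.
move=> [s [Ps ->]] [s' [Ps' ->]]; exists ([seq (c * z.1, z.2) | z <- s] ++ s'); split.
  by move=> z; rewrite mem_cat => /orP [/mapP [z' /Ps + ->]|/Ps'].
by rewrite big_cat big_map scaler_sumr; congr (_ + _); apply: eq_bigr => z _; rewrite scalerA.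
Qed.

Lemma spanZ (P : A -> Prop) c x : Defs.span P x -> Defs.span P (c *: x).
Proof. by move=> Px; rewrite -[_ *: x]addr0; apply: spanD (span0 P). Qed.

Lemma span_sub (P Q : A -> Prop) x : (forall y, P y -> Q y) -> Defs.span P x -> Defs.span Q x.
Proof. by move=> PQ [s [Ps ->]]; exists s; split=> // y /Ps /PQ. Qed.

Lemma spanM (P : A -> Prop) x y : (forall x y, P x -> P y -> P (x * y)) ->
  Defs.span P x -> Defs.span P y -> Defs.span P (x * y).
Proof.
move=> PM [s [Ps ->]] [s' [Ps' ->]].
exists [seq (z.1 * z'.1, z.2 * z'.2) | z <- s, z' <- s']; split.
  by move=> w /allpairsP [[z z'] [/Ps hz /Ps' hz' ->]]; apply: PM.
rewrite big_allpairs_dep mulr_suml; apply: eq_bigr => z _.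
by rewrite mulr_sumr; apply: eq_bigr => z' _; rewrite -scalerAl -scalerAr scalerA.
Qed.

Lemma lin_span_eq (f g : A -> k) (P : A -> Prop) x : lin f -> lin g ->
  (forall y, P y -> f y = g y) -> Defs.span P x -> f x = g x.
Proof.
move=> hf hg fg [s [Ps ->]]; rewrite (lin_sum hf) (lin_sum hg).
by apply: eq_big_seq => y /Ps Py; rewrite (linZ hf) (linZ hg) fg.
Qed.

Lemma linear_endo_span_id F (P : A -> Prop) x : linear_endo F ->
  (forall y, P y -> F y = y) -> Defs.span P x -> F x = x.
Proof.
move=> hF Fid [s [Ps ->]]; rewrite (linear_endo_sum hF); apply: eq_big_seq => y /Ps Py.
by rewrite (linear_endoZ hF) Fid.
Qed.

Definition is_subspace (U : set A) := U 0 /\ forall c x y, U x -> U y -> U (c *: x + y).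

(* Zorn's lemma; unlike [U `<=` W], the clause [W x -> U `<=` W] holds for the empty union. *)
Lemma maximal_subspace_avoiding (U : set A) v : is_subspace U -> ~ U v ->
  exists M, [/\ U `<=` M, is_subspace M, ~ M v & forall x, exists c, M (x - c *: v)].
Proof.
move=> [U0 UD] nUv.
pose closed (W : set A) := forall c x y, W x -> W y -> W (c *: x + y).
pose P W := [/\ closed W, ~ W v & forall x, W x -> U `<=` W].
have [M [[MD nMv MU] maxM]] : exists M, P M /\ forall B, M `<` B -> ~ P B.
  apply: Zorn_bigcup => F FP Ftot; split.
  - move=> c x y [X FX Xx] [Y FY Yy].
    have [XY|YX] := Ftot X Y FX FY.
    + by exists Y => //; have [YD _ _] := FP Y FY; apply: YD => //; apply: XY.
    + by exists X => //; have [XD _ _] := FP X FX; apply: XD => //; apply: YX.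
  - by move=> [X FX Xv]; have [_ + _] := FP X FX; apply.
  - move=> x [X FX Xx] u Uu; exists X => //.
    by have [_ _ XU] := FP X FX; apply: XU Xx _ Uu.
have UM : U `<=` M.
  have [[m Mm]|M0] := pselect (exists m, M m); first exact: MU Mm.
  exfalso; apply: (maxM U); last by split=> // x _.
  by split=> [m Mm|/(_ 0 U0) M0']; [case: M0; exists m | case: M0; exists 0].
have M0 : M 0 by apply: UM.
exists M; split=> // x; apply: contrapT => nx.
pose B (z : A) := exists m c, M m /\ z = m + c *: x.
have MB : M `<=` B by move=> m Mm; exists m, 0; rewrite scale0r addr0.
apply: (maxM B); split=> //.
- move=> /(_ x) Mx; apply: nx; exists 0; rewrite scale0r subr0; apply: Mx.
  by exists 0, 1; rewrite add0r scale1r.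
- move=> c _ _ [m [a [Mm ->]]] [m' [a' [Mm' ->]]].
  exists (c *: m + m'), (c * a + a'); split; first exact: MD.
  by rewrite scalerDr scalerA addrACA scalerDl.
- move=> [m [a [Mm Ev]]]; have [a0|a0] := eqVneq a 0.
    by apply: nMv; rewrite Ev a0 scale0r addr0.
  apply: nx; exists a^-1; rewrite Ev scalerDr scalerA mulVf // scale1r opprD addrCA subrr addr0.
  by rewrite -scaleNr -[_ *: m]addr0; apply: MD.
- by move=> z _ u /UM /MB.
Qed.

Lemma separating_functional (U : set A) v : is_subspace U -> ~ U v ->
  exists2 phi, lin phi & (forall u, U u -> phi u = 0) /\ phi v = 1.
Proof.
move=> hU nUv; have [M [UM [M0 MD] nMv Mx]] := maximal_subspace_avoiding hU nUv.
have [phi hphi] := choice Mx.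
have phi_uniq x a b : M (x - a *: v) -> M (x - b *: v) -> a = b.
  move=> Ma Mb; apply: contra_notP nMv => /eqP ab.
  have Mab : M ((a - b) *: v).
    rewrite -[_ *: v](addKr (x - a *: v)) -[- (x - a *: v)]scaleN1r.
    by apply: MD => //; rewrite scalerBl addrA addrNK.
  rewrite -[v](scale1r) -(mulVf (_ : a - b != 0)) ?subr_eq0 //.
  by rewrite -scalerA -[_ *: (_ *: v)]addr0; apply: MD.
exists phi; [|split].
- move=> c x y; apply: phi_uniq (hphi _) _.
  rewrite scalerDl -scalerA opprD addrACA -scalerBr; exact: MD.
- by move=> u Uu; apply: phi_uniq (hphi u) _; rewrite scale0r subr0; apply: UM.
- by apply: phi_uniq (hphi v) _; rewrite scale1r subrr.
Qed.

Lemma lin_separate (x y : A) : (forall f, lin f -> f x = f y) -> x = y.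
Proof.
move=> fxy; apply: contrapT => nxy.
have hU : is_subspace (fun z : A => z = 0).
  by split=> // c _ _ -> ->; rewrite scaler0 addr0.
have nz : x - y <> 0 by move/eqP; rewrite subr_eq0 => /eqP.
have [phi hphi [_ phi1]] := separating_functional hU nz.
move: phi1; rewrite addrC -scaleN1r hphi (fxy _ hphi) mulN1r addNr.
by move/eqP; rewrite eq_sym oner_eq0.
Qed.

Implicit Types (t : seq (A * A)) (f g : A -> k).

Definition teval (f g : A -> k) (t : seq (A * A)) := \sum_(x <- t) f x.1 * g x.2.

Lemma teq2_trans t1 t2 t3 : teq2 t1 t2 -> teq2 t2 t3 -> teq2 t1 t3.
Proof. by move=> e12 e23 f g hf hg; rewrite (e12 f g) ?(e23 f g). Qed.

Lemma teq2I t t' :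
  (forall f g, lin f -> lin g -> teval f g t = teval f g t') -> teq2 t t'.
Proof. by []. Qed.

Lemma teq2_eval f g t t' : teq2 t t' -> lin f -> lin g -> teval f g t = teval f g t'.
Proof. by move=> tt' hf hg; apply: tt'. Qed.

Lemma teq2_nilP t : teq2 t [::] <-> forall f g, lin f -> lin g -> teval f g t = 0.
Proof.
split=> h f g hf hg; first by rewrite /teval h // big_nil.
by rewrite big_nil; apply: h.
Qed.

Lemma teval_cat f g t t' : teval f g (t ++ t') = teval f g t + teval f g t'.
Proof. exact: big_cat. Qed.

Lemma teval_flatten f g ts : teval f g (flatten ts) = \sum_(t <- ts) teval f g t.
Proof. exact: big_flatten. Qed.

Lemma teval_map2 f g F G t : teval f g (tmap2 F G t) = teval (f \o F) (g \o G) t.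
Proof. exact: big_map. Qed.

Lemma teval_scale f g c t : lin f -> teval f g (tscale c t) = c * teval f g t.
Proof.
move=> hf; rewrite /teval big_map mulr_sumr; apply: eq_bigr => x _.
by rewrite (linZ hf) mulrA.
Qed.

Lemma teval_mul f g t t' :
  teval f g (tmul t t') = \sum_(y <- t) \sum_(z <- t') f (y.1 * z.1) * g (y.2 * z.2).
Proof. exact: big_allpairs_dep. Qed.

Lemma teval_mul_l f g t t' : teval f g (tmul t t') =
  \sum_(z <- t') teval (fun x => f (x * z.1)) (fun x => g (x * z.2)) t.
Proof. by rewrite teval_mul exchange_big. Qed.

Lemma tmul_teq0 t t' : teq2 t [::] \/ teq2 t' [::] -> teq2 (tmul t t') [::].
Proof.
move=> t0; apply/teq2_nilP => f g hf hg; case: t0 => /teq2_nilP t0.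
  by rewrite teval_mul_l big1 // => z _; apply: t0; [apply: lin_mulr | apply: lin_mulr].
by rewrite teval_mul big1 // => y _; exact: (t0 _ _ (lin_mull y.1 hf) (lin_mull y.2 hg)).
Qed.

Lemma teval_tmul_neq0 f g t t' : lin f -> lin g -> teval f g (tmul t t') != 0 ->
  ~ teq2 t [::] /\ ~ teq2 t' [::].
Proof.
move=> hf hg /eqP T; split=> t0; apply: T; apply: (proj1 (teq2_nilP _)) hf hg.
  by apply: tmul_teq0; left.
by apply: tmul_teq0; right.
Qed.

Lemma teval3_comul_l (D : A -> seq (A * A)) t f g h :
  \sum_(w <- comul_l D t) f w.1.1 * g w.1.2 * h w.2 = \sum_(y <- t) teval f g (D y.1) * h y.2.
Proof. by rewrite big_flatten big_map; apply: eq_bigr => y _; rewrite big_map mulr_suml. Qed.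

Lemma teval3_comul_r (D : A -> seq (A * A)) t f g h :
  \sum_(w <- comul_r D t) f w.1.1 * g w.1.2 * h w.2 = \sum_(y <- t) f y.1 * teval g h (D y.2).
Proof.
rewrite big_flatten big_map; apply: eq_bigr => y _; rewrite big_map mulr_sumr.
by apply: eq_bigr => z _; rewrite mulrA.
Qed.

Definition contr_l (f : A -> k) (t : seq (A * A)) := \sum_(x <- t) f x.1 *: x.2.
Definition contr_r (g : A -> k) (t : seq (A * A)) := \sum_(x <- t) g x.2 *: x.1.

Lemma lin_contr_l f g t : lin g -> g (contr_l f t) = teval f g t.
Proof. by move=> hg; rewrite (lin_sum hg); apply: eq_bigr => x _; rewrite (linZ hg). Qed.

Lemma lin_contr_r f g t : lin f -> f (contr_r g t) = teval f g t.
Proof. by move=> hf; rewrite (lin_sum hf); apply: eq_bigr => x _; rewrite (linZ hf) mulrC. Qed.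

Lemma teq2_contr_r g t t' : lin g -> teq2 t t' -> contr_r g t = contr_r g t'.
Proof. by move=> hg tt'; apply: lin_separate => f hf; rewrite !lin_contr_r //; apply: tt'. Qed.

Definition dual_basis (s b : seq A) (e : A -> A -> k) :=
  [/\ forall u, lin (e u), {subset b <= s} & forall w, w \in s -> w = \sum_(u <- b) e u w *: u].

Lemma dual_basis_exists s : exists b e, dual_basis s b e.
Proof.
elim: s => [|v s [b [e [he bs hs]]]].
  by exists [::], (fun _ _ => 0); split=> // u c x y; rewrite mulr0 addr0.
have s_span w : w \in s -> Defs.span (fun u => u \in b) w.
  by move=> /hs ->; exists [seq (e u w, u) | u <- b]; rewrite big_map; split=> // _ /mapP [u ? ->].
have [vb|nvb] := pselect (Defs.span (fun u => u \in b) v).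
  exists b, e; split=> [//|u /bs us|w]; first by rewrite inE us orbT.
  rewrite inE => /orP [/eqP ->|/hs //]; apply/esym.
  apply: (linear_endo_span_id (F := fun w => \sum_(u <- b) e u w *: u) _ _ vb) => [c x y|u].
    by rewrite scaler_sumr -big_split; apply: eq_bigr => u _; rewrite he scalerDl scalerA.
  by move=> /bs /hs <-.
have hU : is_subspace (Defs.span (fun u => u \in b)).
  by split=> [|c x y]; [apply: span0 | apply: spanD].
have [phi hphi [phi0 phiv]] := separating_functional hU nvb.
have vNb u : u \in b -> (u == v) = false.
  by move=> ub; apply: contra_notF nvb => /eqP <-; apply: span_id.
exists (v :: b), (fun u => if u == v then phi else fun x => e u x - e u v * phi x); split.
- move=> u; case: eqP => [_|_ c x y]; first exact: hphi.
  by rewrite he hphi; ring.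
- by move=> u; rewrite !inE => /orP [->|/bs ->]; rewrite ?orbT.
move=> w; rewrite big_cons eqxx big_seq.
under eq_bigr => u /vNb -> do [].
rewrite -big_seq inE => /orP [/eqP ->|ws].
  by rewrite phiv scale1r big1 ?addr0 // => u _; rewrite mulr1 subrr scale0r.
rewrite (phi0 w (s_span w ws)) scale0r add0r {1}(hs w ws).
by apply: eq_bigr => u _; rewrite mulr0 subr0.
Qed.

Lemma teq2_expand_l t b e : dual_basis [seq x.1 | x <- t] b e ->
  teq2 t [seq (u, contr_l (e u) t) | u <- b].
Proof.
move=> [he _ hs] f g hf hg; rewrite big_map /=.
transitivity (\sum_(x <- t) \sum_(u <- b) f u * (e u x.1 * g x.2)).
  apply: eq_big_seq => x xt; rewrite {1}[x.1]hs ?map_f // (lin_sum hf) mulr_suml.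
  by apply: eq_bigr => u _; rewrite (linZ hf) mulrCA mulrA.
by rewrite exchange_big; apply: eq_bigr => u _; rewrite lin_contr_l // mulr_sumr.
Qed.

Lemma teq2_expand_r t b e : dual_basis [seq x.2 | x <- t] b e ->
  teq2 t [seq (contr_r (e u) t, u) | u <- b].
Proof.
move=> [he _ hs] f g hf hg; rewrite big_map /=.
transitivity (\sum_(x <- t) \sum_(u <- b) (f x.1 * e u x.2) * g u).
  apply: eq_big_seq => x xt; rewrite {1}[x.2]hs ?map_f // (lin_sum hg) mulr_sumr.
  by apply: eq_bigr => u _; rewrite (linZ hg) mulrA.
by rewrite exchange_big; apply: eq_bigr => u _; rewrite lin_contr_r // mulr_suml.
Qed.

(* Expand t in a dual basis of its left factors, then of its right factors. *)
Lemma in_tensor_contr (P : A -> Prop) t :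
  (forall g, lin g -> P (contr_r g t)) -> (forall f, lin f -> P (contr_l f t)) ->
  in_tensor P t.
Proof.
move=> Pr Pl; have [b1 [e1 hb1]] := dual_basis_exists [seq x.1 | x <- t].
set t1 := [seq (u, contr_l (e1 u) t) | u <- b1].
have [b2 [e2 hb2]] := dual_basis_exists [seq x.2 | x <- t1].
have tt1 : teq2 t t1 by apply: teq2_expand_l.
exists [seq (contr_r (e2 w) t1, w) | w <- b2]; split; last first.
  by apply: teq2_trans tt1 _; apply: teq2_expand_r.
have [he2 b2s _] := hb2; move=> _ /mapP [w wb2 ->] /=; split.
  by rewrite -(teq2_contr_r (he2 w) tt1); apply: Pr.
have /b2s /mapP [_ /mapP [u _ ->] ->] := wb2.
by apply: Pl; case: hb1.
Qed.

Lemma in_tensor_teq2 (P : A -> Prop) t t' : teq2 t t' -> in_tensor P t' -> in_tensor P t.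
Proof. by move=> tt' [t'' [Pt'' t't'']]; exists t''; split=> //; apply: teq2_trans t't''. Qed.

Lemma in_tensor_nil (P : A -> Prop) : in_tensor P [::].
Proof. by exists [::]. Qed.

Lemma in_tensor_cat (P : A -> Prop) t t' :
  in_tensor P t -> in_tensor P t' -> in_tensor P (t ++ t').
Proof.
move=> [u [Pu tu]] [u' [Pu' tu']]; exists (u ++ u'); split.
  by move=> x; rewrite mem_cat => /orP [/Pu|/Pu'].
apply: teq2I => f g hf hg.
by rewrite !teval_cat; congr (_ + _); [apply: tu | apply: tu'].
Qed.

Lemma in_tensor_flatten (P : A -> Prop) ts :
  (forall t, t \in ts -> in_tensor P t) -> in_tensor P (flatten ts).
Proof.
elim: ts => [|t ts IHts] Pts; first exact: in_tensor_nil.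
apply: in_tensor_cat; first by apply: Pts; rewrite inE eqxx.
by apply: IHts => t' t't; apply: Pts; rewrite inE t't orbT.
Qed.

Lemma in_tensor_scale (P : A -> Prop) c t : (forall x, P x -> P (c *: x)) ->
  in_tensor P t -> in_tensor P (tscale c t).
Proof.
move=> PZ [u [Pu tu]]; exists (tscale c u); split.
  by move=> _ /mapP [x /Pu [? ?] ->]; split=> //; apply: PZ.
apply: teq2I => f g hf hg.
by rewrite !teval_scale //; congr (_ * _); apply: tu.
Qed.

End LinearAlgebra.

Definition slope_le (R : realType) (mu : option R) (g : R * R) :=
  if mu is Some m then g.2 <= m * g.1 else true.

Section Slopes.
Variables (R : realType) (Gam : R * R -> Prop) (mu : option R).
Hypothesis Gam_cone : forall g, Gam g -> 0 < g.1 \/ (g.1 = 0 /\ 0 <= g.2).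

Lemma Gam_leP g : Gam_le Gam mu g <-> Gam g /\ slope_le mu g.
Proof.
rewrite /slope_le; split=> [[nu [numu [Gg gnu]]]|[Gg gmu]].
  split=> //; case: mu numu => [m|//]; case: nu gnu => [n /eqP -> /= nm|//].
  by case: (Gam_cone Gg) => [/ltW g1|[-> _]]; rewrite ?mulr0 // ler_wpM2r.
have [g10|g1N0] := eqVneq g.1 0; last first.
  exists (Some (g.2 / g.1)); split=> //=; last by rewrite divfK.
  case: mu gmu => // m; case: (Gam_cone Gg) => [g1P|[/eqP]]; last by rewrite (negbTE g1N0).
  by rewrite ler_pdivrMr.
case: mu gmu => [m gm|_]; last by exists None; rewrite /= g10.
exists (Some m); split; first exact: lexx.
split=> //=.
case: (Gam_cone Gg) => [|[_]]; rewrite g10 ?ltxx // mulr0 => g2.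
by rewrite eq_le g2 -(mulr0 m) -g10 gm.
Qed.

Lemma in_slope0 : in_slope mu (0, 0).
Proof. by case: mu => [m|] //=; rewrite mulr0. Qed.

Lemma in_slopeD b c : in_slope mu b -> in_slope mu c -> in_slope mu (dadd b c).
Proof. by case: mu => [m|] /= /eqP hb /eqP hc; rewrite hb hc ?mulrDr ?addr0. Qed.

Lemma in_slopeDr b c : in_slope mu (dadd b c) -> in_slope mu b -> in_slope mu c.
Proof.
case: mu => [m|] /= /eqP + /eqP hb; rewrite hb; first by rewrite mulrDr => /addrI ->.
by rewrite add0r => ->.
Qed.

Lemma slope_leD b c : slope_le mu b -> slope_le mu c -> slope_le mu (dadd b c).
Proof. by rewrite /slope_le; case: mu => [m|] //= hb hc; rewrite mulrDr lerD. Qed.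

Lemma slope_leDr b c : slope_le mu (dadd b c) -> in_slope mu b -> slope_le mu c.
Proof. by rewrite /slope_le; case: mu => [m|] //= + /eqP hb; rewrite hb mulrDr lerD2l. Qed.

(* Only the case mu = oo uses the cone condition. *)
Lemma in_slope_summands b c : Gam b -> Gam c -> slope_le mu b -> slope_le mu c ->
  in_slope mu (dadd b c) -> in_slope mu b /\ in_slope mu c.
Proof.
move=> Gb Gc; have b1 : 0 <= b.1 by case: (Gam_cone Gb) => [/ltW|[->]].
have c1 : 0 <= c.1 by case: (Gam_cone Gc) => [/ltW|[->]].
rewrite /slope_le; case: mu => [m|] /= bm cm /eqP bc.
  have b2 : b.2 = m * b.1.
    by apply/eqP; rewrite eq_le bm -(lerD2r c.2) bc mulrDr lerD2l.
  by split; apply/eqP=> //; move: bc; rewrite b2 mulrDr => /addrI.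
have b10 : b.1 = 0 by apply/eqP; rewrite eq_le b1 -bc lerDl c1.
by move: bc; rewrite b10 add0r => ->; rewrite eqxx.
Qed.

Lemma in_slope_pairwise b1 b2 c1 c2 : Gam b1 -> Gam b2 ->
  slope_le mu b1 -> slope_le mu b2 -> in_slope mu (dadd b1 c1) -> in_slope mu (dadd b2 c2) ->
  in_slope mu (dadd b1 b2) && in_slope mu (dadd c1 c2) =
  (in_slope mu b1 && in_slope mu b2) && (in_slope mu c1 && in_slope mu c2).
Proof.
move=> G1 G2 l1 l2 s1 s2; apply/idP/idP => [/andP [s12 _]|/andP [/andP [t1 t2] /andP [u1 u2]]].
  have [t1 t2] := in_slope_summands G1 G2 l1 l2 s12.
  by rewrite t1 t2 (in_slopeDr s1 t1) (in_slopeDr s2 t2).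
by rewrite !in_slopeD.
Qed.

End Slopes.

Arguments Gam_leP {R Gam mu} Gam_cone {g}.

Section GradedBialgebra.
Variables (R : realType) (k : fieldType) (A : algType k).
Variables (Gam : R * R -> Prop) (pi : R * R -> A -> A) (supp : A -> seq (R * R)).
Variables (D : A -> seq (A * A)) (eps : A -> k).
Hypothesis HA : graded_conn_bialg Gam pi supp D eps.
Implicit Types (t : seq (A * A)) (f g : A -> k) (b c d : R * R) (S : seq (R * R)).

Lemma Gam_cone b : Gam b -> 0 < b.1 \/ (b.1 = 0 /\ 0 <= b.2).
Proof. by case: HA => [[_ _ + _] _ _ _ _]; apply. Qed.

Lemma Gam0 : Gam (0, 0). Proof. by case: HA => [[]]. Qed.

Lemma GamD b c : Gam b -> Gam c -> Gam (dadd b c).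
Proof. by case: HA => [[_ + _ _] _ _ _ _]; apply. Qed.

Lemma pi_lin b : linear_endo (pi b).
Proof. by case: HA => _ [+ _ _ _ _] _ _ _ c x y; apply. Qed.

Lemma pi_idem b x : pi b (pi b x) = pi b x.
Proof. by case: HA => _ [_ + _ _ _] _ _ _; apply. Qed.

Lemma pi_orth b c x : b != c -> pi b (pi c x) = 0.
Proof. by case: HA => _ [_ _ + _ _] _ _ _; apply. Qed.

Lemma pi_supp b x : pi b x != 0 -> Gam b /\ b \in supp x.
Proof. by case: HA => _ [_ _ _ + _] _ _ _; apply. Qed.

Lemma pi_decomp x : x = \sum_(b <- undup (supp x)) pi b x.
Proof. by case: HA => _ [_ _ _ _ +] _ _ _; apply. Qed.

Lemma homogM b c x y : homog pi b x -> homog pi c y -> homog pi (dadd b c) (x * y).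
Proof. by case: HA => _ _ [+ _] _ _; apply. Qed.

Lemma homog1 : homog pi (0, 0) 1. Proof. by case: HA => _ _ [_ +] _ _. Qed.

Lemma D_lin (c : k) x y : teq2 (D (c *: x + y)) (tscale c (D x) ++ D y).
Proof. by case: HA => _ _ _ _ [[+ _ _ _ _] _]; apply. Qed.

Lemma D_coassoc x : teq3 (comul_l D (D x)) (comul_r D (D x)).
Proof. by case: HA => _ _ _ _ [[_ + _ _ _] _]; apply. Qed.

Lemma D_counit x : \sum_(y <- D x) eps y.1 *: y.2 = x /\ \sum_(y <- D x) eps y.2 *: y.1 = x.
Proof. by case: HA => _ _ _ _ [[_ _ + _ _] _]; apply. Qed.

Lemma DM x y : teq2 (D (x * y)) (tmul (D x) (D y)).
Proof. by case: HA => _ _ _ _ [[_ _ _ [+ _] _] _]; apply. Qed.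

Lemma D1 : teq2 (D 1) [:: (1, 1)].
Proof. by case: HA => _ _ _ _ [[_ _ _ [_ +] _] _]. Qed.

Lemma eps_lin : lin eps.
Proof. by case: HA => _ _ _ _ [[_ _ _ _ [+ _]] _] c x y; apply. Qed.

Lemma epsM x y : eps (x * y) = eps x * eps y.
Proof. by case: HA => _ _ _ _ [[_ _ _ _ [_ [+ _]]] _]; apply. Qed.

Lemma eps1 : eps 1 = 1.
Proof. by case: HA => _ _ _ _ [[_ _ _ _ [_ [_ +]]] _]. Qed.

Lemma D_graded b c d x : homog pi d x -> dadd b c != d ->
  teq2 (tmap2 (pi b) (pi c) (D x)) [::].
Proof. by case: HA => _ _ _ _ [_ [+ _]]; apply. Qed.

Lemma eps_graded b x : homog pi b x -> b != (0, 0) -> eps x = 0.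
Proof. by case: HA => _ _ _ _ [_ [_ +]]; apply. Qed.

Lemma pi_homog b d w : homog pi d w -> pi b w = if b == d then w else 0.
Proof. by move=> hw; case: eqP => [->|/eqP bd] //; rewrite -hw pi_orth. Qed.

Definition degs (xs : seq A) := undup (flatten (map supp xs)).

Lemma degs_uniq xs : uniq (degs xs). Proof. exact: undup_uniq. Qed.

Lemma degs_sub x xs : x \in xs -> {subset supp x <= degs xs}.
Proof. by move=> xxs b bx; rewrite mem_undup; apply/flattenP; exists (supp x); rewrite ?map_f. Qed.

Definition tdegs t := degs (unzip1 t ++ unzip2 t).

Lemma tdegs_l y t : y \in t -> {subset supp y.1 <= tdegs t}.
Proof. by move=> yt; apply: degs_sub; rewrite mem_cat map_f. Qed.

Lemma tdegs_r y t : y \in t -> {subset supp y.2 <= tdegs t}.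
Proof. by move=> yt; apply: degs_sub; rewrite mem_cat [_ \in unzip2 t]map_f ?orbT. Qed.

Lemma pi_decomp_in S x : uniq S -> {subset supp x <= S} -> x = \sum_(b <- S) pi b x.
Proof.
move=> uS xS; rewrite {1}[x]pi_decomp; apply: big_uniq_supp; rewrite ?undup_uniq // => b.
by move=> /pi_supp [_ bx]; rewrite mem_undup bx xS.
Qed.

Definition graded_prod (Q : R * R -> R * R -> bool) S x y :=
  \sum_(b <- S) \sum_(c <- S | Q b c) pi b x * pi c y.

Lemma mul_graded_prod S x y : uniq S -> {subset supp x <= S} -> {subset supp y <= S} ->
  x * y = graded_prod (fun _ _ => true) S x y.
Proof.
move=> uS xS yS; rewrite {1}(pi_decomp_in uS xS) {1}(pi_decomp_in uS yS) mulr_suml.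
by apply: eq_bigr => b _; rewrite mulr_sumr.
Qed.

Lemma pi_graded_prod d S x y : uniq S -> {subset supp x <= S} -> {subset supp y <= S} ->
  pi d (x * y) = graded_prod (fun b c => dadd b c == d) S x y.
Proof.
move=> uS xS yS; rewrite (mul_graded_prod uS xS yS) (linear_endo_sum (pi_lin d)).
apply: eq_bigr => b _; rewrite (linear_endo_sum (pi_lin d)) [RHS]big_mkcond; apply: eq_bigr => c _.
by rewrite (pi_homog _ (homogM (pi_idem b x) (pi_idem c y))) eq_sym.
Qed.

Lemma teval_graded_prods f g (F1 F2 : A -> A -> A) Q1 Q2 ta tb : lin f -> lin g ->
  (forall S x y, uniq S -> {subset supp x <= S} -> {subset supp y <= S} ->
     F1 x y = graded_prod Q1 S x y) ->
  (forall S x y, uniq S -> {subset supp x <= S} -> {subset supp y <= S} ->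
     F2 x y = graded_prod Q2 S x y) ->
  \sum_(u <- ta) \sum_(v <- tb) f (F1 u.1 v.1) * g (F2 u.2 v.2) =
  \sum_(b1 <- tdegs (ta ++ tb)) \sum_(b2 <- tdegs (ta ++ tb))
  \sum_(c1 <- tdegs (ta ++ tb)) \sum_(c2 <- tdegs (ta ++ tb) | Q1 b1 b2 && Q2 c1 c2)
     teval f g (tmul (tmap2 (pi b1) (pi c1) ta) (tmap2 (pi b2) (pi c2) tb)).
Proof.
move=> hf hg F1E F2E; set S := tdegs (ta ++ tb).
have expand x y x' y' : f (graded_prod Q1 S x y) * g (graded_prod Q2 S x' y') =
  \sum_(b1 <- S) \sum_(b2 <- S) \sum_(c1 <- S) \sum_(c2 <- S | Q1 b1 b2 && Q2 c1 c2)
     f (pi b1 x * pi b2 y) * g (pi c1 x' * pi c2 y').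
  rewrite (lin_sum hf) mulr_suml; apply: eq_bigr => b1 _.
  rewrite (lin_sum hf) mulr_suml big_mkcond; apply: eq_bigr => b2 _ /=.
  case: (Q1 b1 b2); last by rewrite big1 // => c1 _; rewrite big_pred0_eq.
  by rewrite (lin_sum hg) mulr_sumr; apply: eq_bigr => c1 _; rewrite (lin_sum hg) mulr_sumr.
transitivity (\sum_(u <- ta) \sum_(v <- tb)
                f (graded_prod Q1 S u.1 v.1) * g (graded_prod Q2 S u.2 v.2)).
  apply: eq_big_seq => u ut; apply: eq_big_seq => v vt.
  have uS : u \in ta ++ tb by rewrite mem_cat ut.
  have vS : v \in ta ++ tb by rewrite mem_cat vt orbT.
  rewrite (F1E _ _ _ (degs_uniq _) (tdegs_l uS) (tdegs_l vS)).
  by rewrite (F2E _ _ _ (degs_uniq _) (tdegs_r uS) (tdegs_r vS)).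
under eq_bigr => u _ do under eq_bigr => v _ do rewrite expand.
rewrite big_exchange3; apply: eq_bigr => b1 _; rewrite big_exchange3; apply: eq_bigr => b2 _.
rewrite big_exchange3; apply: eq_bigr => c1 _; rewrite big_exchange3; apply: eq_bigr => c2 _.
by rewrite teval_mul big_map; apply: eq_bigr => u _; rewrite big_map.
Qed.

Definition Dpair f g x := teval f g (D x).

Lemma lin_Dpair f g : lin f -> lin g -> lin (Dpair f g).
Proof.
by move=> hf hg c x y; rewrite /Dpair (teq2_eval (D_lin c x y) hf hg) teval_cat teval_scale.
Qed.

Lemma Dpair_coassoc f g h x : lin f -> lin g -> lin h ->
  \sum_(y <- D x) Dpair f g y.1 * h y.2 = \sum_(y <- D x) f y.1 * Dpair g h y.2.
Proof.
by move=> hf hg hh; rewrite -teval3_comul_l -teval3_comul_r; apply: D_coassoc.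
Qed.

Lemma Dpair_pi f g d1 d2 b x : lin f -> lin g ->
  Dpair (f \o pi d1) (g \o pi d2) (pi b x) =
  if dadd d1 d2 == b then Dpair (f \o pi d1) (g \o pi d2) x else 0.
Proof.
move=> hf hg; set M := Dpair _ _.
have hM : lin M by apply: lin_Dpair; apply: lin_comp => //; apply: pi_lin.
have M0 d y : dadd d1 d2 != d -> M (pi d y) = 0.
  move=> ne; rewrite /M /Dpair -teval_map2.
  by rewrite (teq2_eval (D_graded (pi_idem d y) ne) hf hg) /teval big_nil.
case: eqP => [<-|/eqP]; last exact: M0.
rewrite [in RHS](pi_decomp x) (lin_sum hM) (big_uniq_supp (s := [:: dadd d1 d2])) ?undup_uniq //.
  by rewrite big_seq1.
move=> d Md; rewrite inE mem_undup; apply/andP; split.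
  have /pi_supp [] // : pi d x != 0.
  by apply: contraNneq Md => ->; rewrite (lin0 hM).
by apply: contraNT Md => nd; rewrite M0 // eq_sym.
Qed.

Lemma Lset_Gam x b : Lset pi D x b -> Gam b.
Proof.
move=> [c]; apply: contra_notP => nGb; apply/teq2_nilP => f g hf hg.
rewrite teval_map2 /teval big1 // => y _ /=.
by have [->|/pi_supp [/nGb]] := eqVneq (pi b y.1) 0; rewrite ?(lin0 hf) ?mul0r.
Qed.

Lemma not_Lset_teq0 x b c : ~ Lset pi D x b -> teq2 (tmap2 (pi b) (pi c) (D x)) [::].
Proof. by move=> nL; apply: contrapT => nt; apply: nL; exists c. Qed.

Lemma not_Lset_eval0 x b f g : ~ Lset pi D x b -> lin f -> lin g ->
  \sum_(y <- D x) f (pi b y.1) * g y.2 = 0.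
Proof.
move=> nL hf hg; set S := tdegs (D x).
transitivity (\sum_(y <- D x) \sum_(c <- S) f (pi b y.1) * g (pi c y.2)).
  apply: eq_big_seq => y yD.
  by rewrite {1}(pi_decomp_in (degs_uniq _) (tdegs_r yD)) (lin_sum hg) mulr_sumr.
rewrite exchange_big big1 // => c _.
by have /teq2_nilP/(_ f g hf hg) := not_Lset_teq0 c nL; rewrite teval_map2.
Qed.

Variable mu : option R.
Local Notation p := (p_mu pi supp mu).
Local Notation Dmu := (Delta_mu pi supp D mu).
Local Notation semistab := (semistable Gam pi D mu).
Local Notation Ass := (A_ss Gam pi D mu).

Lemma p_in S x : uniq S -> {subset supp x <= S} -> p x = \sum_(b <- S | in_slope mu b) pi b x.
Proof.
move=> uS xS; apply: big_uniq_supp; rewrite ?undup_uniq // => b /pi_supp [_ bx].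
by rewrite mem_undup bx xS.
Qed.

Lemma p_lin : linear_endo p.
Proof.
move=> c x y; set S := degs [:: x; y; c *: x + y].
have pS z : z \in [:: x; y; c *: x + y] -> p z = \sum_(b <- S | in_slope mu b) pi b z.
  by move=> zS; apply: p_in (degs_uniq _) (degs_sub zS).
move: (pS x) (pS y) (pS (c *: x + y)); rewrite !inE !eqxx ?orbT.
move=> /(_ isT) -> /(_ isT) -> /(_ isT) ->.
by rewrite scaler_sumr -big_split; apply: eq_bigr => b _; apply: pi_lin.
Qed.

Lemma p_homog d w : homog pi d w -> p w = if in_slope mu d then w else 0.
Proof.
move=> hw; rewrite /p_mu (big_uniq_supp (s := [:: d])) ?undup_uniq //.
  by rewrite big_cons big_nil addr0 hw.
move=> b; rewrite (pi_homog _ hw) mem_undup inE.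
have [-> | bd] := eqVneq b d; last by rewrite eqxx.
by rewrite andbT => wN0; have := @pi_supp d w; rewrite hw => /(_ wN0) [].
Qed.

Lemma p1 : p 1 = 1.
Proof. by rewrite (p_homog homog1) in_slope0. Qed.

Lemma eps_p x : eps (p x) = eps x.
Proof.
rewrite [in RHS](pi_decomp x) /p_mu !(lin_sum eps_lin) big_rmcond // => b sb.
by apply: (eps_graded (pi_idem b x)); apply: contraNneq sb => ->; apply: in_slope0.
Qed.

Lemma p_A_ss x : Ass x -> p x = x.
Proof.
move=> Ax; apply: (linear_endo_span_id p_lin _ Ax) => y [d [hy _ sd _]].
by rewrite (p_homog hy) sd.
Qed.

Lemma p_graded_prod S x y : uniq S -> {subset supp x <= S} -> {subset supp y <= S} ->
  p (x * y) = graded_prod (fun b c => in_slope mu (dadd b c)) S x y.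
Proof.
move=> uS xS yS; rewrite (mul_graded_prod uS xS yS) (linear_endo_sum p_lin).
apply: eq_bigr => b _; rewrite (linear_endo_sum p_lin) [RHS]big_mkcond; apply: eq_bigr => c _.
by rewrite (p_homog (homogM (pi_idem b x) (pi_idem c y))).
Qed.

Lemma pp_graded_prod S x y : uniq S -> {subset supp x <= S} -> {subset supp y <= S} ->
  p x * p y = graded_prod (fun b c => in_slope mu b && in_slope mu c) S x y.
Proof.
move=> uS xS yS; rewrite (p_in uS xS) (p_in uS yS) mulr_suml big_mkcond.
apply: eq_bigr => b _; case: (in_slope mu b) => /=; first by rewrite mulr_sumr.
by rewrite big_pred0_eq.
Qed.

Lemma teval_Dmu f g x : teval f g (Dmu x) = Dpair (f \o p) (g \o p) x.
Proof. exact: teval_map2. Qed.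

Lemma lin_teval_Dmu f g : lin f -> lin g -> lin (fun x => teval f g (Dmu x)).
Proof. by move=> hf hg c x y; rewrite !teval_Dmu; apply: lin_Dpair; apply: lin_comp p_lin. Qed.

Lemma Dpair_p f g x : lin f -> lin g ->
  Dpair (f \o p) (g \o p) x =
  \sum_(b <- tdegs (D x) | in_slope mu b) \sum_(c <- tdegs (D x) | in_slope mu c)
    Dpair (f \o pi b) (g \o pi c) x.
Proof.
move=> hf hg; transitivity (\sum_(y <- D x) \sum_(b <- tdegs (D x) | in_slope mu b)
    \sum_(c <- tdegs (D x) | in_slope mu c) f (pi b y.1) * g (pi c y.2)).
  apply: eq_big_seq => y yD /=.
  rewrite (p_in (degs_uniq _) (tdegs_l yD)) (p_in (degs_uniq _) (tdegs_r yD)).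
  by rewrite (lin_sum hf) mulr_suml; apply: eq_bigr => b _; rewrite (lin_sum hg) mulr_sumr.
by rewrite exchange_big; apply: eq_bigr => b _; rewrite exchange_big.
Qed.

Definition Lset_le x := forall b, Lset pi D x b -> Gam_le Gam mu b.

Lemma semistable_component x d b c : homog pi d x -> Lset_le x ->
  ~ teq2 (tmap2 (pi b) (pi c) (D x)) [::] -> Gam_le Gam mu b /\ dadd b c = d.
Proof.
move=> hx Lx nt; split; apply: contra_notP nt => nb.
  by apply: not_Lset_teq0 => /Lx.
by apply: D_graded hx _; apply/eqP.
Qed.

Lemma semistable1 : semistab 1.
Proof.
exists (0, 0); split; [exact: homog1 | exact: Gam0 | exact: in_slope0 |] => b [c].
have [-> _|b0] := eqVneq b (0, 0).
  by apply/(Gam_leP Gam_cone); split; [exact: Gam0 | case: mu => //= m; rewrite mulr0].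
case; apply/teq2_nilP => f g hf hg.
rewrite teval_map2 (teq2_eval D1 (lin_comp hf (pi_lin b)) (lin_comp hg (pi_lin c))).
by rewrite /teval big_seq1 /= (pi_homog _ homog1) (negbTE b0) (lin0 hf) mul0r.
Qed.

Lemma semistableM x y : semistab x -> semistab y -> semistab (x * y).
Proof.
move=> [d [hx Gd sd Lx]] [e [hy Ge se Ly]].
exists (dadd d e); split; [exact: homogM | exact: GamD | exact: in_slopeD |].
move=> b [c]; apply: contra_notP => nb; apply/teq2_nilP => f g hf hg.
have hfb := lin_comp hf (pi_lin b); have hgc := lin_comp hg (pi_lin c).
rewrite teval_map2 (teq2_eval (DM x y) hfb hgc) teval_mul.
rewrite (teval_graded_prods _ _ hf hg (pi_graded_prod b) (pi_graded_prod c)).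
apply: big1 => b1 _; apply: big1 => b2 _; apply: big1 => c1 _; apply: big1 => c2 /andP [/eqP b12 _].
apply/eqP; apply: contraT => /(teval_tmul_neq0 hf hg) [].
move=> /(semistable_component hx Lx) [/(Gam_leP Gam_cone) [G1 l1] _].
move=> /(semistable_component hy Ly) [/(Gam_leP Gam_cone) [G2 l2] _].
by case: nb; rewrite -b12; apply/(Gam_leP Gam_cone); split; [apply: GamD | apply: slope_leD].
Qed.

Lemma contr_r_homog b h F t : homog pi b (contr_r h (tmap2 (pi b) F t)).
Proof.
rewrite /homog /contr_r big_map (linear_endo_sum (pi_lin b)); apply: eq_bigr => y _.
by rewrite (linear_endoZ (pi_lin b)) pi_idem.
Qed.

Lemma contr_l_homog c h F t : homog pi c (contr_l h (tmap2 F (pi c) t)).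
Proof.
rewrite /homog /contr_l big_map (linear_endo_sum (pi_lin c)); apply: eq_bigr => y _.
by rewrite (linear_endoZ (pi_lin c)) pi_idem.
Qed.

Lemma homog_A_ss d z : homog pi d z -> in_slope mu d -> Lset_le z -> Ass z.
Proof.
move=> hz sd Lz; have [->|zN0] := eqVneq z 0; first exact: span0.
apply: span_id; exists d; split=> //.
by have := @pi_supp d z; rewrite hz => /(_ zN0) [].
Qed.

(* These are the left tensor factors of the component; coassociativity puts their left degrees
   in L(x). *)
Lemma A_ss_contr_r x d b c h : homog pi d x -> Lset_le x -> in_slope mu b -> dadd b c = d ->
  lin h -> Ass (contr_r h (tmap2 (pi b) (pi c) (D x))).
Proof.
move=> hx Lx sb bcd hh; set X := contr_r _ _.
apply: (homog_A_ss (contr_r_homog _ _ _ _) sb) => b' [d']; apply: contra_notP => nb'.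
apply/teq2_nilP => f g hf hg; rewrite teval_map2 -/(Dpair _ _ X).
have hM : lin (Dpair (f \o pi b') (g \o pi d')).
  by apply: lin_Dpair; apply: lin_comp => //; apply: pi_lin.
rewrite /X /contr_r big_map (lin_sum hM).
have [e|ne] := eqVneq (dadd b' d') b; last first.
  by rewrite big1 // => y _; rewrite /= (linZ hM) Dpair_pi // (negbTE ne) mulr0.
under eq_bigr => y _ do rewrite /= (linZ hM) Dpair_pi // e eqxx mulrC.
have hfb : lin (f \o pi b') by apply: lin_comp hf (pi_lin b').
have hgd : lin (g \o pi d') by apply: lin_comp hg (pi_lin d').
have hhc : lin (h \o pi c) by apply: lin_comp hh (pi_lin c).
rewrite (Dpair_coassoc x hfb hgd hhc); apply: not_Lset_eval0 hf (lin_Dpair hgd hhc).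
by move=> /Lx.
Qed.

(* The right tensor factors: their left degrees b' satisfy b + b' in L(x). *)
Lemma A_ss_contr_l x d b c h : homog pi d x -> Lset_le x -> in_slope mu b -> dadd b c = d ->
  in_slope mu c -> lin h -> Ass (contr_l h (tmap2 (pi b) (pi c) (D x))).
Proof.
move=> hx Lx sb bcd sc hh; set Y := contr_l _ _.
apply: (homog_A_ss (contr_l_homog _ _ _ _) sc) => b' Lb'; have Gb' := Lset_Gam Lb'.
apply: contrapT => nb'; case: Lb' => d'; apply.
apply/teq2_nilP => f g hf hg; rewrite teval_map2 -/(Dpair _ _ Y).
have hM : lin (Dpair (f \o pi b') (g \o pi d')).
  by apply: lin_Dpair; apply: lin_comp => //; apply: pi_lin.
rewrite /Y /contr_l big_map (lin_sum hM).
have [e|ne] := eqVneq (dadd b' d') c; last first.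
  by rewrite big1 // => y _; rewrite /= (linZ hM) Dpair_pi // (negbTE ne) mulr0.
under eq_bigr => y _ do rewrite /= (linZ hM) Dpair_pi // e eqxx.
have hhb : lin (h \o pi b) by apply: lin_comp hh (pi_lin b).
have hfb : lin (f \o pi b') by apply: lin_comp hf (pi_lin b').
have hgd : lin (g \o pi d') by apply: lin_comp hg (pi_lin d').
rewrite -(Dpair_coassoc x hhb hfb hgd).
have E z : Dpair (h \o pi b) (f \o pi b') z =
           Dpair (h \o pi b) (f \o pi b') (pi (dadd b b') z).
  by rewrite Dpair_pi // eqxx.
under eq_bigr => y _ do rewrite E.
apply: (not_Lset_eval0 _ (lin_Dpair hhb hfb) hgd) => Lbb'.
have [_ /slope_leDr /(_ sb) lb'] := (Gam_leP Gam_cone).1 (Lx _ Lbb').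
by apply: nb'; apply/(Gam_leP Gam_cone).
Qed.

Lemma Dmu_tensor_semistable x : semistab x -> in_tensor Ass (Dmu x).
Proof.
move=> [d [hx _ _ Lx]]; set S := tdegs (D x).
apply: (in_tensor_teq2 (t' := flatten [seq flatten
  [seq tmap2 (pi b) (pi c) (D x) | c <- S & in_slope mu c] | b <- S & in_slope mu b])).
  apply: teq2I => f g hf hg.
  rewrite teval_Dmu Dpair_p // teval_flatten big_map big_filter; apply: eq_bigr => b _.
  by rewrite teval_flatten big_map big_filter; apply: eq_bigr => c _; rewrite teval_map2.
apply: in_tensor_flatten => t /mapP [b]; rewrite mem_filter => /andP [sb _] ->.
apply: in_tensor_flatten => t' /mapP [c]; rewrite mem_filter => /andP [sc _] ->.
have [bcd|bcd] := eqVneq (dadd b c) d; last first.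
  exact: in_tensor_teq2 (D_graded hx bcd) (in_tensor_nil _).
by apply: in_tensor_contr => h hh; [apply: A_ss_contr_r bcd hh | apply: A_ss_contr_l bcd sc hh].
Qed.

Lemma Dmu_tensor x : Ass x -> in_tensor Ass (Dmu x).
Proof.
move=> [s [Ps ->]].
apply: (in_tensor_teq2 (t' := flatten [seq tscale z.1 (Dmu z.2) | z <- s])).
  apply: teq2I => f g hf hg; have hD := lin_teval_Dmu hf hg.
  rewrite (lin_sum hD) teval_flatten big_map; apply: eq_bigr => z _.
  by rewrite (linZ hD) teval_scale.
apply: in_tensor_flatten => t /mapP [z zs ->].
by apply: in_tensor_scale (Dmu_tensor_semistable (Ps z zs)) => w; apply: spanZ.
Qed.

Lemma Dmu_lin (c : k) x y : teq2 (Dmu (c *: x + y)) (tscale c (Dmu x) ++ Dmu y).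
Proof.
apply: teq2I => f g hf hg.
by rewrite teval_cat teval_scale //; apply: lin_teval_Dmu.
Qed.

Lemma Dmu_p x : teq2 (Dmu (p x)) (Dmu x).
Proof.
apply: teq2I => f g hf hg; have hM := lin_teval_Dmu hf hg.
rewrite [in RHS](pi_decomp x) /p_mu !(lin_sum hM) big_rmcond // => b sb.
rewrite teval_Dmu Dpair_p // big1 // => b1 sb1; rewrite big1 // => c1 sc1.
rewrite Dpair_pi //; case: eqP => // bb; case/negP: sb; rewrite -bb.
exact: in_slopeD.
Qed.

Lemma Dmu_coassoc x : teq3 (comul_l Dmu (Dmu x)) (comul_r Dmu (Dmu x)).
Proof.
move=> f g h hf hg hh; rewrite teval3_comul_l teval3_comul_r !big_map /=.
under eq_bigr => y _ do rewrite (teq2_eval (Dmu_p y.1) hf hg) teval_Dmu.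
under [RHS]eq_bigr => y _ do rewrite (teq2_eval (Dmu_p y.2) hg hh) teval_Dmu.
by apply: Dpair_coassoc; apply: lin_comp p_lin.
Qed.

Lemma Dmu_counit x : Ass x ->
  \sum_(y <- Dmu x) eps y.1 *: y.2 = x /\ \sum_(y <- Dmu x) eps y.2 *: y.1 = x.
Proof.
move=> Ax; have [l r] := D_counit x; rewrite !big_map /=.
split; (transitivity (p x); last exact: p_A_ss).
  rewrite -{2}l (linear_endo_sum p_lin); apply: eq_bigr => y _.
  by rewrite (linear_endoZ p_lin) eps_p.
rewrite -{2}r (linear_endo_sum p_lin); apply: eq_bigr => y _.
by rewrite (linear_endoZ p_lin) eps_p.
Qed.

(* A nonzero term has bidegrees
   (b1, c1), (b2, c2) with b1, b2 of slope <= mu and b1 + c1, b2 + c2 of slope mu; for those, the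
   two selecting conditions agree. *)
Lemma DmuM_semistable f g x y : lin f -> lin g -> semistab x -> semistab y ->
  teval f g (Dmu (x * y)) = teval f g (tmul (Dmu x) (Dmu y)).
Proof.
move=> hf hg [d [hx _ sd Lx]] [e [hy _ se Ly]].
rewrite teval_Dmu /Dpair (teq2_eval (DM x y) (lin_comp hf p_lin) (lin_comp hg p_lin)) teval_mul.
rewrite (teval_graded_prods _ _ hf hg p_graded_prod p_graded_prod).
rewrite teval_mul big_map; under eq_bigr => u _ do rewrite big_map.
rewrite (teval_graded_prods _ _ hf hg pp_graded_prod pp_graded_prod).
apply: eq_bigr => b1 _; apply: eq_bigr => b2 _; apply: eq_bigr => c1 _.
rewrite big_mkcond [RHS]big_mkcond; apply: eq_bigr => c2 _.
set T := teval f g _; have [-> |] := eqVneq T 0; first by rewrite !if_same.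
move=> /(teval_tmul_neq0 hf hg) [].
move=> /(semistable_component hx Lx) [/(Gam_leP Gam_cone) [G1 l1] e1].
move=> /(semistable_component hy Ly) [/(Gam_leP Gam_cone) [G2 l2] e2].
by rewrite (in_slope_pairwise Gam_cone G1 G2 l1 l2) ?e1 ?e2.
Qed.

Lemma DmuM x y : Ass x -> Ass y -> teq2 (Dmu (x * y)) (tmul (Dmu x) (Dmu y)).
Proof.
move=> Ax Ay; apply: teq2I => f g hf hg; have hD := lin_teval_Dmu hf hg.
have linM_l z : lin (fun w => teval f g (tmul (Dmu w) (Dmu z))).
  under eq_fun => w do rewrite teval_mul_l.
  by apply: lin_sumf => v; apply: lin_teval_Dmu; apply: lin_mulr.
have linM_r z : lin (fun w => teval f g (tmul (Dmu z) (Dmu w))).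
  under eq_fun => w do rewrite teval_mul.
  apply: lin_sumf => u.
  exact: (lin_teval_Dmu (lin_mull u.1 hf) (lin_mull u.2 hg)).
apply: (lin_span_eq (lin_mulr y hD) (linM_l y) _ Ax) => x' sx'.
apply: (lin_span_eq (lin_mull x' hD) (linM_r x') _ Ay) => y' sy'.
exact: DmuM_semistable.
Qed.

Lemma Dmu1 : teq2 (Dmu 1) [:: (1, 1)].
Proof.
apply: teq2I => f g hf hg.
rewrite teval_Dmu /Dpair (teq2_eval D1 (lin_comp hf p_lin) (lin_comp hg p_lin)).
by rewrite /teval !big_seq1 /= p1.
Qed.

End GradedBialgebra.

Theorem proposition2p2 (R : realType) (k : fieldType) (A : algType k)
    (Gam : R * R -> Prop) (pi : R * R -> A -> A) (supp : A -> seq (R * R))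
    (D : A -> seq (A * A)) (eps : A -> k) :
  graded_conn_bialg Gam pi supp D eps ->
  forall mu : option R,
    [/\ (* A_[mu] is a subalgebra of A_mu *)
        (forall a, A_ss Gam pi D mu a -> A_sl Gam pi mu a),
        (forall c a b, A_ss Gam pi D mu a -> A_ss Gam pi D mu b ->
           A_ss Gam pi D mu (c *: a + b)),
        A_ss Gam pi D mu 1 /\
        (forall a b, A_ss Gam pi D mu a -> A_ss Gam pi D mu b ->
           A_ss Gam pi D mu (a * b)),
        (* Delta_mu(A_[mu]) lies in A_[mu] (x) A_[mu] *)
        (forall a, A_ss Gam pi D mu a ->
           in_tensor (A_ss Gam pi D mu) (Delta_mu pi supp D mu a))
      & (* (A_[mu], Delta_mu) is a bialgebra *)
        bialg_on (A_ss Gam pi D mu) (Delta_mu pi supp D mu) eps].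
Proof.
move=> HA mu; split.
- by move=> x; apply: span_sub => y [d [hy Gd sd _]]; exists d.
- by move=> c x y; apply: spanD.
- split; first exact/span_id/(semistable1 HA).
  by move=> x y; apply: spanM => x' y' sx sy; exact: (semistableM HA sx sy).
- by move=> x Ax; exact: (Dmu_tensor HA Ax).
split.
- by move=> c x y _ _; exact: (Dmu_lin HA).
- by move=> x _; exact: (Dmu_coassoc HA).
- by move=> x Ax; exact: (Dmu_counit HA Ax).
- by split; [move=> x y Ax Ay; exact: (DmuM HA Ax Ay) | exact: (Dmu1 HA)].
- split; first by move=> c x y _ _; exact: (eps_lin HA).
  by split; [move=> x y _ _; exact: (epsM HA) | exact: (eps1 HA)].
Qed.
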